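(* Let $D\ge1$ and let $\mathcal{F}$ be a collection of pairwise non-overlapping simplices on $\gamma_D$ in $\mathbb{R}^D$ whose vertex sets have union $V$ with $D+1\le|V|\le D+2$. Then $\mathcal{F}$ can be extended to a triangulation of $\mathrm{conv}(V)$ without adding new vertices, i.e. there is a triangulation of $\mathrm{conv}(V)$ with all vertices in $V$ containing every simplex of $\mathcal{F}$.
   Context: $\gamma_D=\{(t,t^2,\dots,t^D):t\in\mathbb{R}\}$. A simplex on $\gamma_D$ is $\mathrm{conv}(\sigma)$ for $\sigma\subseteq\gamma_D$ with $|\sigma|\le D+1$. Simplices overlap if $\mathrm{conv}(\sigma)\cap\mathrm{conv}(\tau)\supsetneq\mathrm{conv}(\sigma\cap\tau)$. *)

From mathcomp Require Import all_boot all_order all_algebra.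
From mathcomp Require Import boolp classical_sets reals.
Set Implicit Arguments. Unset Strict Implicit. Unset Printing Implicit Defensive.
Import Order.TTheory GRing.Theory Num.Theory.
Local Open Scope ring_scope.
Local Open Scope classical_set_scope.

Section Defs.
Variables (R : realType) (D : nat).
Notation pt := 'rV[R]_D.

Definition moment (t : R) : pt := \row_(i < D) t ^+ i.+1.

Definition gamma : set pt := range moment.

Definition conv (A : set pt) : set pt :=
  [set p | exists (n : nat) (x : 'I_n -> pt) (w : 'I_n -> R),
      (forall i, A (x i)) /\ (forall i, 0 <= w i) /\
      \sum_(i < n) w i = 1 /\ p = \sum_(i < n) w i *: x i].

Definition card_between (A : set pt) (lo hi : nat) : Prop :=
  exists s : seq pt, uniq s /\ (lo <= size s <= hi)%N /\ A = [set` s].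

(* a simplex on gamma_D, represented by its vertex set sigma:
   sigma is a subset of gamma_D with |sigma| <= D+1 *)
Definition simplex_on_curve (sigma : set pt) : Prop :=
  sigma `<=` gamma /\
  exists s : seq pt, uniq s /\ (size s <= D.+1)%N /\ sigma = [set` s].

Definition overlap (sigma tau : set pt) : Prop :=
  conv (sigma `&` tau) `<` conv sigma `&` conv tau.

(* a triangulation of conv(V) with all vertices in V: a collection of
   simplices (vertex sets) contained in V, closed under taking faces,
   pairwise non-overlapping (so any two meet in a common face), whose
   union is conv(V) *)
Definition triangulation (V : set pt) (T : set (set pt)) : Prop :=
  (forall sigma, T sigma -> simplex_on_curve sigma /\ sigma `<=` V) /\
  (forall sigma tau, T sigma -> tau `<=` sigma -> T tau) /\
  (forall sigma tau, T sigma -> T tau -> ~ overlap sigma tau) /\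
  \bigcup_(sigma in T) conv sigma = conv V.

End Defs.

From mathcomp Require Import all_boot all_order all_algebra.
From mathcomp Require Import boolp classical_sets reals.
From mathcomp Require Import ring lra.
Set Implicit Arguments. Unset Strict Implicit. Unset Printing Implicit Defensive.
Import Order.TTheory GRing.Theory Num.Theory.
Local Open Scope ring_scope.
Local Open Scope classical_set_scope.

(* Points of the moment curve are in general position: an affine dependence
   supported on at most D+1 of them vanishes, since pairing it with the
   polynomial of degree at most D vanishing at all but one of the support
   parameters isolates a single coefficient.  So if |V| = D+1, all subsets of V
   are faces of one simplex and triangulate conv(V).  If |V| = D+2, V is a
   circuit: its affine dependences are the multiples of one lam without zero
   coefficients, and the subsets of V missing a point of the positive part of
   lam (or, symmetrically, of the negative part) triangulate conv(V).  A simplex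
   containing the positive part and one containing the negative part overlap at
   the Radon point, hence the non-overlapping family F fits into one of these
   two triangulations. *)

Lemma card_lt_of_notin n (A : {pred 'I_n}) j : j \notin A -> (#|A| < n)%N.
Proof.
move=> jA; rewrite -[X in (_ < X)%N]card_ord; apply: proper_card.
by apply/properP; split; [apply/fintype.subsetP | exists j].
Qed.

Section ConvexHull.
Variables (R : realType) (D : nat).
Implicit Types A B sigma tau : set 'rV[R]_D.

Lemma conv_subset A B : A `<=` B -> conv A `<=` conv B.
Proof.
move=> AB p [n [x [w [Ax [w0 [w1 ->]]]]]].
by exists n, x, w; split=> // i; apply: AB.
Qed.

Lemma not_overlapP sigma tau :
  ~ overlap sigma tau <-> conv sigma `&` conv tau `<=` conv (sigma `&` tau).
Proof.
split=> [nov | meet [_]]; last exact.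
apply: contrapT => nsub; apply: nov; split=> // p conv_p.
by split; apply: conv_subset conv_p => x [].
Qed.

End ConvexHull.

Section AffineDependence.
Variables (R : realType) (D n : nat) (v : 'I_n -> 'rV[R]_D).
Implicit Types c d : 'I_n -> R.

Definition affine_dep c := \sum_j c j = 0 /\ \sum_j c j *: v j = 0.

Lemma affine_depBZ c d mu :
  affine_dep c -> affine_dep d -> affine_dep (fun j => c j - mu * d j).
Proof.
move=> [c0 cv] [d0 dv]; split.
  by rewrite sumrB -mulr_sumr c0 d0 mulr0 subrr.
under eq_bigr do rewrite scalerBl -scalerA.
by rewrite sumrB -scaler_sumr cv dv scaler0 subrr.
Qed.

Lemma affine_depN c : affine_dep c -> affine_dep (fun j => - c j).
Proof.
move=> [c0 cv]; split; first by rewrite sumrN c0 oppr0.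
by under eq_bigr do rewrite scaleNr; rewrite sumrN cv oppr0.
Qed.

Lemma affine_dep_gt0 c : affine_dep c -> (exists j, c j != 0) ->
  exists j, 0 < c j.
Proof.
move=> [c0 _] [j cj]; apply: contrapT => /forallNP c_le0.
have Nc_ge0 i : true -> 0 <= - c i by rewrite oppr_ge0 leNgt => _; apply/negP/c_le0.
have Nc0 : \sum_i - c i = 0 by rewrite sumrN c0 oppr0.
by move: cj; rewrite -oppr_eq0 (psumr_eq0P Nc_ge0 Nc0 (i:=j)) ?eqxx.
Qed.

Lemma affine_dep_exists :
  (D.+1 < n)%N -> exists2 c, affine_dep c & exists j, c j != 0.
Proof.
move=> ltDn.
pose M := row_mx (const_mx 1 : 'cV[R]_n) (\matrix_j v j).
have : kermx M != 0.
  rewrite kermx_eq0; apply/negP => /eqP rkM.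
  by have := rank_leq_col M; rewrite rkM leqNgt ltDn.
case/matrix0Pn => i [j kij]; exists (fun j => kermx M i j); last by exists j.
have := congr1 (row i) (mulmx_ker M).
rewrite row_mul row0 mul_mx_row -row_mx0 => /eq_row_mx [sum0 comb0].
split.
  move/matrixP/(_ 0 0): sum0; rewrite !mxE => sum0.
  by rewrite -[RHS]sum0; apply: eq_bigr => k _; rewrite !mxE mulr1.
rewrite -[RHS]comb0 mulmx_sum_row; apply: eq_bigr => k _.
by rewrite rowK !mxE.
Qed.

Definition general_position :=
  forall c, affine_dep c -> (#|support c| <= D.+1)%N -> forall j, c j = 0.

Hypothesis gen_pos : general_position.

Lemma affine_dep_eq0 c : (n <= D.+1)%N -> affine_dep c -> forall j, c j = 0.
Proof.
move=> leD dep_c; apply: gen_pos => //.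
by apply: leq_trans (max_card _) _; rewrite card_ord.
Qed.

Section Circuit.
Hypothesis n_eq : n = D.+2.
Variable lam : 'I_n -> R.
Hypotheses (dep_lam : affine_dep lam) (lam_nontriv : exists j, lam j != 0).

Lemma affine_dep_eq0_at c j : affine_dep c -> c j = 0 -> forall i, c i = 0.
Proof.
move=> dep_c cj; apply: gen_pos => //.
have lt_n : (#|support c| < n)%N.
  by apply: (card_lt_of_notin (j := j)); rewrite inE /= cj eqxx.
exact: leq_trans lt_n (eq_leq n_eq).
Qed.

Lemma circuit_neq0 j : lam j != 0.
Proof.
have [i lam_i] := lam_nontriv.
by apply/eqP => lam_j; rewrite (affine_dep_eq0_at dep_lam lam_j) eqxx in lam_i.
Qed.

Lemma circuit_unique c : affine_dep c -> exists mu, forall j, c j = mu * lam j.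
Proof.
move=> dep_c; have [i lam_i] := lam_nontriv; exists (c i / lam i) => j.
apply/eqP; rewrite -subr_eq0; apply/eqP; move: j.
apply: (affine_dep_eq0_at (j := i) (affine_depBZ _ dep_c dep_lam)).
by rewrite divfK ?subrr.
Qed.

End Circuit.
End AffineDependence.

Section MomentCurve.
Variables (R : realType) (D n : nat) (t : 'I_n -> R).

Lemma moment_dep_horner c : affine_dep (fun j => moment D (t j)) c ->
  forall p : {poly R}, (size p <= D.+1)%N -> \sum_j c j * p.[t j] = 0.
Proof.
move=> [c0 cv] p sp.
have power_sum k : (k < D.+1)%N -> \sum_j c j * t j ^+ k = 0.
  case: k => [_|k ltkD]; first by under eq_bigr do rewrite expr0 mulr1.
  have /matrixP/(_ 0 (Ordinal (ltkD : (k < D)%N))) := cv.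
  rewrite summxE !mxE => cv_k; rewrite -[RHS]cv_k.
  by apply: eq_bigr => j _; rewrite !mxE.
under eq_bigr do rewrite (horner_coef_wide _ sp) mulr_sumr.
rewrite exchange_big big1 //= => k _.
under eq_bigr do rewrite mulrCA.
by rewrite -mulr_sumr power_sum ?mulr0.
Qed.

Lemma moment_general_position : injective t ->
  general_position (fun j => moment D (t j)).
Proof.
move=> t_inj c dep_c card_c i; apply: contrapT => /eqP ci.
pose p := \prod_(j in [predD1 support c & i]) ('X - (t j)%:P).
have size_p : (size p <= D.+1)%N.
  rewrite /p -big_enum size_prod_XsubC -cardE.
  by move: card_c; rewrite (cardD1 i (support c)) inE ci.
have p_vanish j : j != i -> c j * p.[t j] = 0.
  move=> ji; have [->|cj] := eqVneq (c j) 0; first by rewrite mul0r.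
  rewrite horner_prod (bigD1 j) /=; last by rewrite !inE ji.
  by rewrite hornerXsubC subrr mul0r mulr0.
have p_ti : p.[t i] != 0.
  rewrite horner_prod; apply/prodf_neq0 => j; rewrite !inE => /andP [ji _].
  by rewrite hornerXsubC subr_eq0; apply: contra ji => /eqP/t_inj ->.
have := moment_dep_horner dep_c size_p.
rewrite (bigD1 i) //= big1 ?addr0 => [/eqP|j ji]; last exact: p_vanish.
by rewrite mulf_eq0 (negbTE ci) (negbTE p_ti).
Qed.

End MomentCurve.

Lemma curve_general_position (R : realType) (D n : nat) (v : 'I_n -> 'rV[R]_D) :
  injective v -> (forall j, gamma (v j)) -> general_position v.
Proof.
move=> v_inj on_curve.
have /choice [t tv] j : exists t, moment D t = v j.
  by have [t _ <-] := on_curve j; exists t.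
have -> : v = fun j => moment D (t j) by apply: funext => j; rewrite tv.
by apply: moment_general_position => i j tij; apply: v_inj; rewrite -!tv tij.
Qed.

Section ConvexWeights.
Variables (R : realType) (D n : nat) (v : 'I_n -> 'rV[R]_D).
Implicit Types (A B sigma tau : set 'rV[R]_D) (p : 'rV[R]_D) (a b : 'I_n -> R).

Definition convex_weights A p a :=
  [/\ forall j, 0 <= a j, forall j, a j != 0 -> A (v j),
      \sum_j a j = 1 & p = \sum_j a j *: v j].

Lemma conv_of_weights A p a : convex_weights A p a -> conv A p.
Proof.
case=> a_ge0 aA a1 ->.
have [j0 aj0] : exists j, a j != 0.
  apply: contrapT => a0; move: a1; rewrite big1 => [/eqP|j _].
    by rewrite eq_sym oner_eq0.
  by apply: contrapT => aj; apply: a0; exists j; apply/eqP.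
exists n, (fun j => if a j != 0 then v j else v j0), a; do !split=> //.
- by move=> j; case: ifP => [/aA | _] //; apply: aA.
- by apply: eq_bigr => j _; case: ifP => // /negbFE/eqP ->; rewrite !scale0r.
Qed.

Lemma weights_of_conv A p : A `<=` range v -> conv A p ->
  exists a, convex_weights A p a.
Proof.
move=> Av [m [x [w [Ax [w_ge0 [w1 ->]]]]]].
have /choice [k vk] i : exists j, v j = x i by have [j _ ?] := Av _ (Ax i); exists j.
exists (fun j => \sum_(i | k i == j) w i); split.
- by move=> j; apply: sumr_ge0.
- move=> j; case: (pickP (fun i => k i == j)) => [i /eqP <- _ | none].
    by rewrite vk.
  by rewrite big_pred0 ?eqxx.
- by rewrite -w1 (partition_big k predT).
- rewrite (partition_big k predT) //=; apply: eq_bigr => j _.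
  by rewrite scaler_suml; apply: eq_bigr => i /eqP <-; rewrite vk.
Qed.

Lemma convex_weights_dep A B p a b : convex_weights A p a -> convex_weights B p b ->
  affine_dep v (fun j => a j - b j).
Proof.
case=> _ _ a1 pa [_ _ b1 pb]; split; first by rewrite sumrB a1 b1 subrr.
by under eq_bigr do rewrite scalerBl; rewrite sumrB -pa -pb subrr.
Qed.

Lemma conv_meet_of_weights sigma tau p a b :
  convex_weights sigma p a -> convex_weights tau p b -> (forall j, a j = b j) ->
  conv (sigma `&` tau) p.
Proof.
case=> a_ge0 a_sigma a1 pa [_ b_tau _ _] ab; apply: (@conv_of_weights _ _ a).
by split=> // j aj; split; [apply: a_sigma | apply: b_tau; rewrite -ab].
Qed.

End ConvexWeights.

Section CurveSimplices.
Variables (R : realType) (D n : nat) (v : 'I_n -> 'rV[R]_D).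
Hypothesis v_inj : injective v.
Implicit Types sigma : set 'rV[R]_D.

Lemma simplex_on_curve_of_card sigma :
  (forall j, gamma (v j)) -> sigma `<=` range v ->
  (#|[pred j | `[< sigma (v j) >]]| <= D.+1)%N -> simplex_on_curve sigma.
Proof.
move=> on_curve sigma_v card_sigma; split.
  by move=> _ /sigma_v [j _ <-].
exists (map v (enum [pred j | `[< sigma (v j) >]])); split.
  by rewrite map_inj_uniq ?enum_uniq.
split; first by rewrite size_map -cardE.
apply/seteqP; split=> x /=.
  move=> sigma_x; have [j _ vjx] := sigma_v _ sigma_x.
  by rewrite -vjx map_f // mem_enum inE vjx.
by case/mapP=> j; rewrite mem_enum inE => sigma_vj ->.
Qed.

Lemma simplex_on_curve_misses sigma : (D.+1 < n)%N -> simplex_on_curve sigma ->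
  exists j, ~ sigma (v j).
Proof.
move=> ltDn [_ [s [uniq_s [size_s ->]]]]; apply/existsNP => all_in.
have /uniq_leq_size : {subset map v (enum 'I_n) <= s}.
  by move=> _ /mapP [j _ ->]; apply/all_in.
rewrite map_inj_uniq // enum_uniq size_map size_enum_ord => /(_ isT) le_ns.
by have := leq_trans le_ns size_s; rewrite leqNgt ltDn.
Qed.

End CurveSimplices.

Section CircuitTriangulation.
Variables (R : realType) (D n : nat) (v : 'I_n -> 'rV[R]_D) (lam : 'I_n -> R).
Implicit Types sigma tau : set 'rV[R]_D.

Definition circuit_triangulation sigma :=
  sigma `<=` range v /\ ~ (forall j, 0 < lam j -> sigma (v j)).

Hypotheses (v_inj : injective v) (gen_pos : general_position v) (n_eq : n = D.+2).
Hypotheses (dep_lam : affine_dep v lam) (lam_nontriv : exists j, lam j != 0).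

Lemma circuit_triangulation_cover :
  conv (range v) `<=` \bigcup_(sigma in circuit_triangulation) conv sigma.
Proof.
have [j0 lam_j0] := affine_dep_gt0 dep_lam lam_nontriv.
move=> p /(weights_of_conv (@subset_refl _ _)) [a [a_ge0 _ a1 pa]].
(* Push the weights of [p] along [- lam] until the first of them vanishes. *)
have [i lam_i i_min] :=
  arg_minP (P := fun j => 0 < lam j) (fun j => a j / lam j) lam_j0.
set mu := a i / lam i.
have mu_ge0 : 0 <= mu by rewrite divr_ge0 // ltW.
exists [set x | range v x /\ x <> v i].
  by split=> [x []|all_pos]; last by have [_] := all_pos i lam_i.
apply: (conv_of_weights (a := fun j => a j - mu * lam j)); split.
- move=> j; rewrite subr_ge0; have [lam_j|lam_j] := ltP 0 (lam j).
    by rewrite -ler_pdivlMr // i_min.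
  by have := a_ge0 j; nra.
- move=> j a'_j; split; first by exists j.
  by move=> /v_inj ji; move: a'_j; rewrite ji /mu divfK ?subrr ?eqxx // gt_eqF.
- by rewrite sumrB -mulr_sumr (proj1 dep_lam) mulr0 subr0.
- under eq_bigr do rewrite scalerBl -scalerA.
  by rewrite sumrB -scaler_sumr (proj2 dep_lam) scaler0 subr0.
Qed.

Lemma circuit_triangulation_nonoverlap sigma tau :
  circuit_triangulation sigma -> circuit_triangulation tau -> ~ overlap sigma tau.
Proof.
move=> [sigma_v /existsNP [i /not_implyP [lam_i not_sigma_i]]].
move=> [tau_v /existsNP [j /not_implyP [lam_j not_tau_j]]].
apply/not_overlapP => p [].
move=> /(weights_of_conv sigma_v) [a wa] /(weights_of_conv tau_v) [b wb].
have [mu ab] :=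
  circuit_unique gen_pos n_eq dep_lam lam_nontriv (convex_weights_dep wa wb).
have [a_ge0 a_sigma _ _] := wa; have [b_ge0 b_tau _ _] := wb.
have a_i : a i = 0 by apply: contrapT => /eqP /a_sigma.
have b_j : b j = 0 by apply: contrapT => /eqP /b_tau.
have mu0 : mu = 0.
  have := ab i; have := ab j; rewrite a_i b_j; have := a_ge0 j; have := b_ge0 i.
  nra.
by apply: conv_meet_of_weights wa wb _ => k; apply/subr0_eq; rewrite ab mu0 mul0r.
Qed.

Lemma circuit_radon_weights sigma tau :
  (forall j, 0 < lam j -> sigma (v j)) -> (forall j, lam j < 0 -> tau (v j)) ->
  exists p a b, [/\ convex_weights v sigma p a, convex_weights v tau p b
                   & forall j, 0 < lam j -> a j != 0].
Proof.
move=> sigma_pos tau_neg.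
(* The Radon point: [a] and [b] are the normalized positive and negative parts of [lam]. *)
pose pos j := if 0 < lam j then lam j else 0.
have pos_ge0 j : 0 <= pos j by rewrite /pos; case: ltP => // /ltW.
have lam_le_pos j : lam j <= pos j by rewrite /pos; case: ltP.
have [j0 lam_j0] := affine_dep_gt0 dep_lam lam_nontriv.
pose S := \sum_j pos j.
have S_gt0 : 0 < S.
  rewrite /S (bigD1 j0) //= {1}/pos lam_j0; apply: ltr_wpDr lam_j0.
  exact: sumr_ge0.
exists (\sum_j (pos j / S) *: v j), (fun j => pos j / S).
exists (fun j => (pos j - lam j) / S); split.
- split=> //.
  + by move=> j; rewrite divr_ge0 // ltW.
  + by move=> j; rewrite /pos; case: ifP => [/sigma_pos //|_]; rewrite mul0r eqxx.
  + by rewrite -mulr_suml divff // gt_eqF.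
- split.
  + by move=> j; rewrite divr_ge0 ?subr_ge0 // ltW.
  + move=> j; rewrite /pos; case: ifPn => [_|]; first by rewrite subrr mul0r eqxx.
    by rewrite -leNgt le_eqVlt => /predU1P [->|/tau_neg //]; rewrite subrr mul0r eqxx.
  + rewrite -(mulr_suml _ _ (fun j => pos j - lam j)) sumrB (proj1 dep_lam).
    by rewrite subr0 divff // gt_eqF.
  + apply/eqP; rewrite -subr_eq0 -sumrB; apply/eqP.
    rewrite (eq_bigr (fun j => S^-1 *: (lam j *: v j))) => [|j _].
      by rewrite -scaler_sumr (proj2 dep_lam) scaler0.
    by rewrite scalerA -scalerBl; congr (_ *: _); ring.
- by move=> j lam_j; rewrite /pos lam_j mulf_neq0 ?invr_eq0 // gt_eqF.
Qed.

Lemma circuit_radon sigma tau : sigma `<=` range v ->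
  (exists i, ~ sigma (v i)) -> (exists j, ~ tau (v j)) ->
  (forall j, 0 < lam j -> sigma (v j)) -> (forall j, lam j < 0 -> tau (v j)) ->
  overlap sigma tau.
Proof.
move=> sigma_v [i not_sigma_i] [j not_tau_j] sigma_pos tau_neg.
have [p [a [b [wa wb a_pos]]]] := circuit_radon_weights sigma_pos tau_neg.
apply: contrapT => /not_overlapP meet.
have [c wc] : exists c, convex_weights v (sigma `&` tau) p c.
  apply: weights_of_conv (meet p (conj (conv_of_weights wa) (conv_of_weights wb))).
  by move=> x [/sigma_v].
have [mu ac] :=
  circuit_unique gen_pos n_eq dep_lam lam_nontriv (convex_weights_dep wa wc).
have lam_neq0 := circuit_neq0 gen_pos n_eq dep_lam lam_nontriv.
have [[_ a_sigma _ _] [_ c_meet _ _]] := (wa, wc).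
have c_out k : ~ (sigma (v k) /\ tau (v k)) -> c k = 0.
  by move=> out; apply: contrapT => /eqP /c_meet.
have a_i : a i = 0 by apply: contrapT => /eqP /a_sigma.
have mu0 : mu = 0.
  have /eqP := ac i; rewrite a_i c_out ?subrr => [|[]//].
  by rewrite eq_sym mulf_eq0 (negbTE (lam_neq0 i)) orbF => /eqP.
have lam_j : 0 < lam j.
  by rewrite lt_neqAle eq_sym lam_neq0 leNgt; apply/negP => /tau_neg.
have := ac j; rewrite mu0 mul0r c_out ?subr0 => [|[_]//].
by apply/eqP/a_pos.
Qed.

End CircuitTriangulation.

Section Triangulations.
Variables (R : realType) (D n : nat) (v : 'I_n -> 'rV[R]_D).
Hypotheses (v_inj : injective v) (on_curve : forall j, gamma (v j)).
Implicit Types (sigma tau : set 'rV[R]_D) (F : set (set 'rV[R]_D)).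

Let gen_pos : general_position v := curve_general_position v_inj on_curve.

Lemma triangulation_of_simplex : (n <= D.+1)%N ->
  triangulation (range v) (fun sigma => sigma `<=` range v).
Proof.
move=> le_nD; split; [|split; [|split]].
- move=> sigma sigma_v; split=> //.
  apply: (simplex_on_curve_of_card v_inj on_curve sigma_v).
  by apply: leq_trans le_nD; rewrite -[X in (_ <= X)%N]card_ord max_card.
- by move=> sigma tau sigma_v /subset_trans; apply.
- move=> sigma tau sigma_v tau_v; apply/not_overlapP => p [].
  move=> /(weights_of_conv sigma_v) [a wa] /(weights_of_conv tau_v) [b wb].
  have ab := affine_dep_eq0 gen_pos le_nD (convex_weights_dep wa wb).
  by apply: conv_meet_of_weights wa wb _ => j; apply/subr0_eq/ab.
- apply/seteqP; split=> [p [sigma /conv_subset sigma_v /sigma_v //]|p conv_p].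
  by exists (range v).
Qed.

Section Circuit.
Hypothesis n_eq : n = D.+2.
Variable lam : 'I_n -> R.
Hypotheses (dep_lam : affine_dep v lam) (lam_nontriv : exists j, lam j != 0).

Lemma triangulation_of_circuit :
  triangulation (range v) (circuit_triangulation v lam).
Proof.
split; [|split; [|split]].
- move=> sigma [sigma_v /existsNP [j /not_implyP [_ not_sigma_j]]]; split=> //.
  apply: (simplex_on_curve_of_card v_inj on_curve sigma_v).
  have lt_n : (#|[pred k | `[< sigma (v k) >]]| < n)%N.
    by apply: (card_lt_of_notin (j := j)); rewrite inE /=; apply/negP => /asboolP.
  exact: leq_trans lt_n (eq_leq n_eq).
- move=> sigma tau [sigma_v not_all] tau_sigma.
  split; first exact: subset_trans tau_sigma sigma_v.
  by move=> all_in; apply: not_all => j /all_in /tau_sigma.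
- exact: circuit_triangulation_nonoverlap.
- apply/seteqP; split; last exact: circuit_triangulation_cover.
  by move=> p [sigma [sigma_v _] /(conv_subset sigma_v)].
Qed.

End Circuit.

Lemma triangulation_extension F : (D.+1 <= n <= D.+2)%N ->
  (forall sigma, F sigma -> simplex_on_curve sigma) ->
  (forall sigma tau, F sigma -> F tau -> ~ overlap sigma tau) ->
  (forall sigma, F sigma -> sigma `<=` range v) ->
  exists T, triangulation (range v) T /\ F `<=` T.
Proof.
move=> /andP [_ le_n] F_simplex F_nonoverlap F_v.
have [le_nD | lt_Dn] := leqP n D.+1.
  by exists (fun sigma => sigma `<=` range v); split; [exact: triangulation_of_simplex|].
have n_eq : n = D.+2 by apply/eqP; rewrite eqn_leq le_n lt_Dn.
have [lam dep_lam lam_nontriv] := affine_dep_exists v lt_Dn.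
have misses sigma : F sigma -> exists j, ~ sigma (v j).
  by move=> /F_simplex; apply: simplex_on_curve_misses.
have [[sigma F_sigma sigma_pos]|no_pos] :=
  pselect (exists2 sigma, F sigma & forall j, 0 < lam j -> sigma (v j)).
- exists (circuit_triangulation v (fun j => - lam j)); split.
    apply: triangulation_of_circuit (affine_depN dep_lam) _ => //.
    by have [j lam_j] := lam_nontriv; exists j; rewrite oppr_eq0.
  move=> tau F_tau; split; first exact: F_v.
  move=> tau_neg; apply: (F_nonoverlap _ _ F_sigma F_tau).
  apply: (circuit_radon gen_pos n_eq dep_lam lam_nontriv (F_v _ F_sigma)
                        (misses _ F_sigma) (misses _ F_tau) sigma_pos).
  by move=> j lam_j; apply: tau_neg; rewrite oppr_gt0.
- exists (circuit_triangulation v lam); split; first exact: triangulation_of_circuit.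
  move=> tau F_tau; split; first exact: F_v.
  by move=> tau_pos; apply: no_pos; exists tau.
Qed.

End Triangulations.

Theorem proposition4p5 (R : realType) (D : nat) (F : set (set 'rV[R]_D)) :
  (1 <= D)%N ->
  (forall sigma, F sigma -> simplex_on_curve sigma) ->
  (forall sigma tau, F sigma -> F tau -> ~ overlap sigma tau) ->
  card_between (\bigcup_(sigma in F) sigma) D.+1 D.+2 ->
  exists T : set (set 'rV[R]_D),
    triangulation (\bigcup_(sigma in F) sigma) T /\ F `<=` T.
Proof.
move=> _ F_simplex F_nonoverlap [s [uniq_s [size_s V_s]]].
pose v (j : 'I_(size s)) := nth 0 s j.
have range_v : range v = [set` s].
  apply/seteqP; split=> [_ [j _ <-]|x s_x]; first exact: mem_nth.
  have lt_x : (index x s < size s)%N by rewrite index_mem.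
  by exists (Ordinal lt_x) => //; rewrite /v nth_index.
have v_inj : injective v by move=> i j /eqP; rewrite /v nth_uniq // => /eqP /val_inj.
have on_curve j : gamma (v j).
  have : (\bigcup_(sigma in F) sigma) (v j) by rewrite V_s; exact: mem_nth.
  by case=> sigma /F_simplex [sigma_gamma _] /sigma_gamma.
rewrite V_s -range_v; apply: triangulation_extension => // sigma F_sigma x sigma_x.
by rewrite range_v -V_s; exists sigma.
Qed.
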